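(* For every $0<\varepsilon\le1$ there is a sequence $(n_j,g_j)$ of pairs of positive integers such that $\frac{C(g_j,n_j)}{n_j}\gtrsim\varepsilon$ and $\frac{g_j}{n_j}\lesssim\varepsilon^2$ as $j\to\infty$.
   Context: A set $S$ of integers is a $B^*[g]\pmod n$ set if for every integer $m$ there are at most $g$ ordered pairs $(s_1,s_2)\in S\times S$ with $s_1+s_2\equiv m\pmod n$. $C(g,n)$ is the largest cardinality of a $B^*[g]\pmod n$ set contained in $\{1,\dots,n\}$. For positive sequences, $a_j\gtrsim b_j$ (equivalently $b_j\lesssim a_j$) means $\liminf_{j\to\infty}a_j/b_j\ge1$. *)

From Stdlib Require Import Reals.
From mathcomp Require Import all_boot.


(* Elements of {1,...,n} are encoded as i : 'I_n standing for the integer i+1. *)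
Definition elt {n : nat} (i : 'I_n) : nat := (nat_of_ord i).+1.

(* Every residue class
   mod n is represented by a natural number m, represented by some m : 'I_n (n >= 1), quantifying over 'I_n suffices. *)
Definition Bstar (g n : nat) (S : {set 'I_n}) : bool :=
  [forall m : 'I_n,
    #|[set p : 'I_n * 'I_n | (p.1 \in S) && (p.2 \in S) &&
         (((elt p.1 + elt p.2) %% n)%N == (m %% n)%N)]| <= g]%N.

Definition Cgn (g n : nat) : nat :=
  \max_(S : {set 'I_n} | Bstar g n S) #|S|.

(* a_j >~ b_j  :<->  liminf a_j / b_j >= 1, unfolded. *)
Definition asym_ge (a b : nat -> R) : Prop :=
  forall delta : R, Rlt 0 delta ->
    exists J : nat, forall j : nat, (J <= j)%N -> Rle (Rminus 1 delta) (Rdiv (a j) (b j)).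

From Stdlib Require Import Reals Lra Lia ZArith.
From mathcomp Require Import all_boot.
From mathcomp Require Import all_algebra zify.
Import GRing.Theory.

(* Fix a prime p > 2 and t < p, and let S in Z/p^3 be the set of the
   u + p v + p^2 w with u, v < p and w = u v + j (mod p) for some j < t, so
   that |S| = p^2 t.  If s1 + s2 = m (mod p^3), the low digit u1 of s1
   determines u2, and comparing the higher digits shows that j2 plus a carry,
   a number in [0, t], is an affine function of v1 of slope u2 - u1 mod p:
   the terms u v in w are what make this slope nonzero.  Hence, apart from
   the single u1 with u2 = u1 (p is odd), s1 is determined by u1, j1 and a
   value in [0, t], and m has at most p t (t + 1) + t p <= p (t + 1)^2
   representations.  With t close to eps p and n = p^3 this gives
   C(g, n)/n >= t/p ~ eps for g = p (t + 1)^2, while g/n ~ eps^2. *)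

Section Encoding.
Variables p t : nat.

Definition code (q : 'I_p * 'I_t * 'I_p) : nat :=
  let: (u, j, v) := q in u + p * (v + p * ((u * v + j) %% p)).

Lemma code_lt q : code q < p ^ 3.
Proof.
case: q => [[u j] v]; rewrite /code.
have hp : 0 < p by case: p u => [[]|].
have := ltn_pmod (u * v + j) hp; have := ltn_ord u; have := ltn_ord v.
rewrite !expnS expn0 muln1; nia.
Qed.

Definition code_ord q : 'I_(p ^ 3) := Ordinal (code_lt q).

Lemma digits_inj {x y x' y' : nat} : x < p -> x' < p ->
  x + p * y = x' + p * y' -> x = x' /\ y = y'.
Proof.
move=> hx hx' h; have hp : 0 < p by case: p hx.
have /(congr1 (modn^~ p)) := h; have /(congr1 (divn^~ p)) := h.
rewrite ![_ + p * _]addnC ![p * _]mulnC !modnMDl !divnMDl // !modn_small //.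
by rewrite !divn_small ?addn0.
Qed.

Lemma code_inj : t <= p -> injective code_ord.
Proof.
move=> htp [[u j] v] [[u' j'] v'] /(congr1 val) /=.
move=> /(digits_inj (ltn_ord u) (ltn_ord u')) [hu].
move=> /(digits_inj (ltn_ord v) (ltn_ord v')) [hv] /eqP.
have ltp (i : 'I_t) : i < p by exact: leq_trans (ltn_ord i) htp.
rewrite -hu -hv eqn_modDl !modn_small ?ltp // => /eqP hj.
by congr (_, _, _); exact: val_inj.
Qed.

Definition code_set : {set 'I_(p ^ 3)} := code_ord @: setT.

Lemma card_code_set : t <= p -> #|code_set| = p * t * p.
Proof.
by move=> htp; rewrite card_imset ?cardsT ?card_prod ?card_ord //; exact: code_inj.
Qed.

End Encoding.

(* When code (u1, j1, v1) + code (u2, j2, v2) = M (mod p^3), the low digit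
   u2 is [low_partner u1], the rest of the sum is [mid_target u1] times p, and
   [partner_index u1 j1 v1] is j2 plus the carry of v1 + v2. *)
Section PartnerResidues.
Local Open Scope ring_scope.
Variables p M : int.

Definition low_partner (u : int) : int := ((M - u) %% p)%Z.

Definition mid_target (u : int) : int := ((M - u - low_partner u) %/ p)%Z.

Definition partner_index (u j v : int) : int :=
  (((mid_target u %/ p)%Z - j - low_partner u * mid_target u
    + v * (low_partner u - u)) %% p)%Z.

Lemma partner_index_le (t : nat) (u1 v1 j1 w1 u2 v2 j2 w2 : int) :
  t%:Z < p -> 0 <= u1 < p -> 0 <= v1 < p -> 0 <= u2 < p -> 0 <= v2 < p ->
  0 <= j2 < t ->
  (w1 = u1 * v1 + j1 %[mod p])%Z -> (w2 = u2 * v2 + j2 %[mod p])%Z ->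
  (u1 + p * (v1 + p * w1) + (u2 + p * (v2 + p * w2)) = M %[mod p ^+ 3])%Z ->
  partner_index u1 j1 v1 <= t.
Proof.
move=> htp hu1 hv1 hu2 hv2 hj2.
move=> /eqP; rewrite eqz_mod_dvd => /dvdzP [a1 ha1].
move=> /eqP; rewrite eqz_mod_dvd => /dvdzP [a2 ha2].
move=> /eqP; rewrite eqz_mod_dvd => /dvdzP [k hk].
have hp : 0 < p by lia.
rewrite !exprS expr0 mulr1 in hk.
set W := w1 + w2 - k * p.
have hlow : low_partner u1 = u2.
  rewrite /low_partner (_ : M - u1 = (v1 + v2 + p * W) * p + u2); last by rewrite /W; nia.
  by rewrite modzMDl modz_small //; lia.
have hmid : mid_target u1 = W * p + (v1 + v2).
  rewrite /mid_target hlow (_ : M - u1 - u2 = (W * p + (v1 + v2)) * p).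
    by rewrite mulzK //; lia.
  by rewrite /W; nia.
set c := ((v1 + v2) %/ p)%Z.
have hc : 0 <= c < 2 by rewrite divz_ge0 // ltz_divLR //; lia.
have -> : partner_index u1 j1 v1 = j2 + c.
  rewrite /partner_index hlow hmid divzMDl -/c; last by lia.
  (* the products u_i v_i in w1 + w2 cancel, leaving only multiples of p *)
  have -> : W + c - j1 - u2 * (W * p + (v1 + v2)) + v1 * (u2 - u1)
            = (a1 + a2 - k - u2 * W) * p + (j2 + c) by rewrite /W; nia.
  by rewrite modzMDl modz_small //; lia.
lia.
Qed.

End PartnerResidues.

Section PrimeModulus.
Local Open Scope ring_scope.

Lemma eqz_mod_small (d a b : int) :
  0 <= a < d -> 0 <= b < d -> (a = b %[mod d])%Z -> a = b.
Proof. by move=> ha hb; rewrite !modz_small. Qed.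

Variable p : nat.
Hypothesis p_prime : prime p.

Lemma eqz_mod_mul2r (s a b : int) : ~~ (p %| s)%Z ->
  (a * s = b * s %[mod p])%Z -> (a = b %[mod p])%Z.
Proof.
rewrite dvdzE => /negbTE hs /eqP.
rewrite !eqz_mod_dvd -mulrBl dvdzE abszM Euclid_dvdM // hs orbF => hab.
by apply/eqP; rewrite eqz_mod_dvd.
Qed.

Lemma not_dvdz_small (s : int) : s != 0 -> `|s| < p -> ~~ (p %| s)%Z.
Proof. by move=> hs0 hs; rewrite dvdzE gtnNdvd // absz_gt0. Qed.

Lemma partner_index_inj (M u j v v' : int) :
  0 <= u < p -> low_partner p M u != u -> 0 <= v < p -> 0 <= v' < p ->
  partner_index p M u j v = partner_index p M u j v' -> v = v'.
Proof.
move=> hu hlow hv hv' /eqP; rewrite eqz_modDl => /eqP /eqz_mod_mul2r.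
have hl : 0 <= low_partner p M u < p by rewrite modz_ge0 ?ltz_pmod //; lia.
have hs : low_partner p M u - u != 0 by rewrite subr_eq0.
have hs_lt : (`|low_partner p M u - u| < p)%N by lia.
by move=> /(_ (not_dvdz_small _ hs hs_lt)) /eqz_mod_small ->.
Qed.

Lemma low_partner_fixed_unique (M u u' : int) : (2 < p)%N ->
  0 <= u < p -> 0 <= u' < p -> low_partner p M u = u -> low_partner p M u' = u' -> u = u'.
Proof.
move=> p_gt2.
have fixed2 (x : int) : 0 <= x < p -> low_partner p M x = x -> (x * 2 = M %[mod p])%Z.
  move=> hx; rewrite /low_partner -{2}(modz_small hx) => /eqP.
  rewrite eqz_mod_dvd => /dvdzP [q hq].
  by apply/eqP; rewrite eqz_mod_dvd; apply/dvdzP; exists (- q); lia.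
move=> hu hu' /(fixed2 _ hu) hu2 /(fixed2 _ hu') hu2'.
apply: (@eqz_mod_small p) => //; apply: (@eqz_mod_mul2r 2); last by rewrite hu2 hu2'.
by apply: not_dvdz_small.
Qed.

End PrimeModulus.

Lemma card_sum_pairs_le (n : nat) (S : {set 'I_n}) (m : 'I_n) :
  #|[set x : 'I_n * 'I_n | (x.1 \in S) && (x.2 \in S) &&
      ((elt x.1 + elt x.2) %% n == m %% n)]|
  <= #|[set a in S | [exists b in S, (elt a + elt b) %% n == m %% n]]|.
Proof.
rewrite -(@card_in_imset _ _ fst); last first.
  move=> [a b] [a' b']; rewrite !inE /= => /andP [_ /eqP h] /andP [_ /eqP h'] ea.
  move: h'; rewrite -{}ea -{}h /elt !addSn !addnS -!addSn => /eqP.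
  by rewrite eqn_modDl !modn_small // => /eqP /ord_inj ->.
apply/subset_leq_card/subsetP => _ /imsetP [[a b] + ->].
by rewrite !inE /= => /andP [/andP [ha hb] hab]; rewrite ha; apply/existsP; exists b; rewrite hb.
Qed.

Lemma elt_sum_modz (n : nat) (a b m : 'I_n) : (elt a + elt b) %% n = m %% n ->
  ((a + b)%:Z = m%:Z - 2 %[mod n])%Z.
Proof.
move=> /(congr1 Posz); rewrite -!modz_nat => /eqP; rewrite !eqz_mod_dvd => h.
apply/eqP; rewrite eqz_mod_dvd.
by rewrite (_ : (_ - _)%R = (Posz (elt a + elt b) - Posz m)%R) // /elt; lia.
Qed.

Section Counting.
Variables p t : nat.
Hypotheses (p_prime : prime p) (p_gt2 : 2 < p) (t_lt_p : t < p).

Section FixedSum.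
Variable m : 'I_(p ^ 3).
Let M : int := (m%:Z - 2)%R.

Definition has_partner (q : 'I_p * 'I_t * 'I_p) : bool :=
  [exists q', (elt (code_ord p t q) + elt (code_ord p t q')) %% p ^ 3 == m %% p ^ 3].

Lemma partner_index_bound (q : 'I_p * 'I_t * 'I_p) : has_partner q ->
  (0 <= partner_index p M q.1.1 q.1.2 q.2 <= t)%R.
Proof.
case: q => [[u j] v] /existsP [[[u' j'] v']] /eqP /elt_sum_modz /=.
rewrite -[Posz (p ^ 3)]natz natrX natz => hsum.
have := (ltn_ord u, ltn_ord v, ltn_ord u', ltn_ord v', ltn_ord j') => -[[[[hu hv] hu'] hv'] hj'].
apply/andP; split; first by rewrite modz_ge0 //; lia.
apply: (@partner_index_le _ _ _ _ _ _ ((u * v + j) %% p)%N u' v' j' ((u' * v' + j') %% p)%N);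
  first [exact: hsum | lia | by rewrite -modz_nat modz_mod].
Qed.

Definition low_fixed (q : 'I_p * 'I_t * 'I_p) : bool := low_partner p M q.1.1 == q.1.1.

Lemma card_partnered_moving :
  #|[set q | has_partner q & ~~ low_fixed q]| <= p * t * t.+1.
Proof.
pose f (q : 'I_p * 'I_t * 'I_p) : 'I_p * 'I_t * 'I_t.+1 :=
  (q.1.1, q.1.2, inord `|partner_index p M q.1.1 q.1.2 q.2|).
rewrite -(@card_in_imset _ _ f); first by rewrite (leq_trans (max_card _)) // !card_prod !card_ord.
move=> [[u j] v] [[u' j'] v']; rewrite !inE /low_fixed /= => /andP [hq hmove] /andP [hq' _].
move=> [eu ej]; subst u' j'; move=> /(congr1 val) /=.
have := (partner_index_bound _ hq, partner_index_bound _ hq') => /= -[hx hx'].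
rewrite !inordK; try lia.
move=> habs; have := ltn_ord u; have := ltn_ord v; have := ltn_ord v' => hv' hv hu.
suff /eqP : Posz v = Posz v' by rewrite eqz_nat => /eqP /ord_inj ->.
by apply: (@partner_index_inj p p_prime M u j); lia.
Qed.

Lemma card_partnered_fixed :
  #|[set q | has_partner q & low_fixed q]| <= t * p.
Proof.
pose f (q : 'I_p * 'I_t * 'I_p) := (q.1.2, q.2).
rewrite -(@card_in_imset _ _ f); first by rewrite (leq_trans (max_card _)) // !card_prod !card_ord.
move=> [[u j] v] [[u' j'] v']; rewrite !inE /low_fixed /= => /andP [_ /eqP hu] /andP [_ /eqP hu'].
move=> [-> ->]; have := ltn_ord u; have := ltn_ord u' => hu1' hu1.
suff /eqP : Posz u = Posz u' by rewrite eqz_nat => /eqP /ord_inj ->.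
by apply: (@low_partner_fixed_unique p p_prime M) => //; lia.
Qed.

Lemma card_partnered : #|[set q | has_partner q]| <= p * (t.+1 * t.+1).
Proof.
rewrite -(cardsID [set q | low_fixed q]).
have -> : [set q | has_partner q] :&: [set q | low_fixed q]
          = [set q | has_partner q & low_fixed q] by apply/setP => q; rewrite !inE.
have -> : [set q | has_partner q] :\: [set q | low_fixed q]
          = [set q | has_partner q & ~~ low_fixed q].
  by apply/setP => q; rewrite !inE andbC.
have := card_partnered_fixed; have := card_partnered_moving; nia.
Qed.

End FixedSum.

Lemma Bstar_code_set : Bstar (p * (t.+1 * t.+1)) (p ^ 3) (code_set p t).
Proof.
apply/forallP => m; apply: leq_trans (card_sum_pairs_le _ _ _) _.
apply: leq_trans (card_partnered m); apply: leq_trans (leq_imset_card (code_ord p t) _).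
apply/subset_leq_card/subsetP => _ /setIdP [/imsetP [q _ ->] /existsP [b /andP [hb hqb]]].
case/imsetP: hb hqb => q' _ -> hqq'.
by apply/imsetP; exists q => //; rewrite inE; apply/existsP; exists q'.
Qed.

End Counting.

Lemma Cgn_code_set_lb (p t : nat) : prime p -> 2 < p -> t < p ->
  p * t * p <= Cgn (p * (t.+1 * t.+1)) (p ^ 3).
Proof.
move=> p_prime p_gt2 t_lt_p; rewrite -(card_code_set _ _ (ltnW t_lt_p)) /Cgn.
apply: (leq_bigmax_cond (F := fun S : {set 'I_(p ^ 3)} => #|S|)).
exact: Bstar_code_set.
Qed.

Definition prime_seq (j : nat) : nat := s2val (prime_above j.+2).

Lemma prime_seq_gt j : j.+2 < prime_seq j.
Proof. by rewrite /prime_seq; case: prime_above. Qed.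

Lemma prime_seq_prime j : prime (prime_seq j).
Proof. by rewrite /prime_seq; case: prime_above. Qed.

(* floor (eps (p - 1)) rather than floor (eps p), so that t < p also for eps = 1 *)
Definition width_seq (eps : R) (j : nat) : nat :=
  Z.to_nat (Int_part (eps * (INR (prime_seq j) - 1))).

Section Asymptotics.
Local Open Scope R_scope.

Lemma INR_expn (m n : nat) : INR (m ^ n)%N = INR m ^ n.
Proof. by elim: n => [|n IH] //=; rewrite expnS mult_INR IH. Qed.

Lemma prime_seq_eventually_ge (c : R) {a : R} : 0 < a ->
  exists J, forall j, (J <= j)%N -> c <= a * INR (prime_seq j).
Proof.
move=> ha; have [J hJ] := INR_unbounded (c / a); exists J => j hj.
have : (J <= prime_seq j)%coq_nat by apply/ssrnat.leP; have := prime_seq_gt j; lia.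
move/le_INR => hJj; rewrite (_ : c = a * (c / a)); last by field; lra.
by apply: Rmult_le_compat_l; lra.
Qed.

Lemma width_seq_bounds (eps : R) (j : nat) : 0 < eps <= 1 ->
  eps * (INR (prime_seq j) - 1) - 1 < INR (width_seq eps j) <= eps * (INR (prime_seq j) - 1)
  /\ (width_seq eps j < prime_seq j)%N.
Proof.
move=> heps; rewrite /width_seq.
set p := INR (prime_seq j); set x := eps * (p - 1).
have hp : 3 <= p.
  have : (3 <= prime_seq j)%coq_nat by apply/ssrnat.leP; have := prime_seq_gt j; lia.
  by move/le_INR; rewrite -/p /=; lra.
have [hlo hhi] := base_Int_part x.
have hint : Z.le 0 (Int_part x).
  have : 0 <= x by rewrite /x; nra.
  by move=> hx; apply: Zlt_succ_le; apply: lt_IZR; rewrite succ_IZR; lra.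
have hT : INR (Z.to_nat (Int_part x)) = IZR (Int_part x) by rewrite INR_IZR_INZ Z2Nat.id.
rewrite hT; split; first lra.
apply/ssrnat.ltP/INR_lt; rewrite hT -/p; have : x <= p - 1 by rewrite /x; nra.
lra.
Qed.

Lemma density_ratio_lb (eps d p t C : R) : 0 < eps <= 1 -> 0 < p -> 2 <= d * eps * p ->
  eps * (p - 1) - 1 < t -> p * t * p <= C -> 1 - d <= C / p ^ 3 / eps.
Proof.
move=> heps hp hd ht hC.
have hpe : 0 < p ^ 3 * eps by apply: Rmult_lt_0_compat; [apply: pow_lt | lra].
have ht' : (1 - d) * eps * p <= t by nra.
apply: (Rmult_le_reg_r _ _ _ hpe).
rewrite (_ : C / p ^ 3 / eps * (p ^ 3 * eps) = C); last by field; lra.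
have : (1 - d) * eps * p * (p * p) <= t * (p * p) by apply: Rmult_le_compat_r; nra.
nra.
Qed.

Lemma repr_ratio_lb (eps d p t : R) : 0 < eps -> 0 < p -> 2 <= d * eps * p ->
  0 <= t <= eps * (p - 1) -> 1 - d <= eps ^ 2 / (p * ((t + 1) * (t + 1)) / p ^ 3).
Proof.
move=> heps hp hd ht.
have hpt : 0 < (t + 1) * (t + 1) by nra.
rewrite (_ : eps ^ 2 / _ = (eps * p) ^ 2 / ((t + 1) * (t + 1))); last by field; lra.
apply: (Rmult_le_reg_r _ _ _ hpt); rewrite /Rdiv Rmult_assoc Rinv_l ?Rmult_1_r; last lra.
rewrite /= Rmult_1_r; set x := eps * p.
have hdx : 2 <= d * x by rewrite /x; lra.
have hx1 : (t + 1) * (t + 1) <= (x + 1) * (x + 1) by rewrite /x; nra.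
case: (Rle_lt_dec 1 d) => hd1; first nra.
have : (1 - d) * ((t + 1) * (t + 1)) <= (1 - d) * ((x + 1) * (x + 1)).
  by apply: Rmult_le_compat_l; lra.
have : 2 * (x + 1) <= d * x * (x + 1) by apply: Rmult_le_compat_r; rewrite /x; nra.
have : 0 <= d * (x + 1) by rewrite /x; nra.
nra.
Qed.

End Asymptotics.

Theorem proposition3p6 :
  forall eps : R, Rlt 0 eps -> Rle eps 1 ->
  exists (n g : nat -> nat),
    (forall j, (0 < n j)%N /\ (0 < g j)%N) /\
    asym_ge (fun j => Rdiv (INR (Cgn (g j) (n j))) (INR (n j))) (fun _ => eps) /\
    asym_ge (fun _ => pow eps 2) (fun j => Rdiv (INR (g j)) (INR (n j))).
Proof.
move=> eps heps0 heps1.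
exists (fun j => prime_seq j ^ 3)%N.
exists (fun j => prime_seq j * ((width_seq eps j).+1 * (width_seq eps j).+1))%N.
have p_gt2 j : (2 < prime_seq j)%N by have := prime_seq_gt j; lia.
have p_gt0 j : Rlt 0 (INR (prime_seq j)).
  by apply/lt_0_INR/ssrnat.ltP; exact: prime_gt0 (prime_seq_prime j).
split; [|split] => [j|d hd|d hd].
- by rewrite expn_gt0 !muln_gt0 prime_gt0 ?prime_seq_prime.
- have [J hJ] := prime_seq_eventually_ge (IZR 2) (Rmult_lt_0_compat d eps hd heps0).
  exists J => j /hJ hp; have [[ht _] ht_lt] := width_seq_bounds _ j (conj heps0 heps1).
  have /ssrnat.leP/le_INR := Cgn_code_set_lb _ _ (prime_seq_prime j) (p_gt2 j) ht_lt.
  by rewrite INR_expn !mult_INR; apply: density_ratio_lb.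
- have [J hJ] := prime_seq_eventually_ge (IZR 2) (Rmult_lt_0_compat d eps hd heps0).
  exists J => j /hJ hp; have [[_ ht] _] := width_seq_bounds _ j (conj heps0 heps1).
  rewrite INR_expn !mult_INR !S_INR; apply: repr_ratio_lb => //.
  by split; [exact: pos_INR | exact: ht].
Qed.
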